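(* Every good set is a basis of $\mathbb R^{2k}$.
   Context: Let $k\ge2$, $n=2k-1$. Let $e_1,\dots,e_k$ be the standard basis of $\mathbb R^k$ and for $r\in\mathbb R$ let $r_{(k)}=(r,\dots,r)\in\mathbb R^k$. For $j=1,\dots,k$ define points of $\mathbb R^{2k}=\mathbb R^k\times\mathbb R^k$: $A_j=(e_j,0_{(k)})$, $B_j=\frac{1}{2n}(2_{(k)}-e_j,\,2_{(k)}-e_j)$, $C_j=(0_{(k)},e_j)$. Let $A=\{A_j\}$, $B=\{B_j\}$, $C=\{C_j\}$, $X=A\cup B\cup C$. A subset $S\subset X$ with $2k$ elements is good if it contains no set of the form $\{A_j,B_j,C_j\}$ and $S\neq A\cup C$. *)

From HB Require Import structures.
From mathcomp Require Import all_boot all_order all_algebra.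
Set Implicit Arguments. Unset Strict Implicit. Unset Printing Implicit Defensive.
Import Order.TTheory GRing.Theory Num.Theory.
Local Open Scope ring_scope.

(* Labels: (0, j) = A_j, (1, j) = B_j, (2, j) = C_j. *)
Definition label (k : nat) := ('I_3 * 'I_k)%type.

Definition e_ (R : realFieldType) (k : nat) (j : 'I_k) : 'rV[R]_k := delta_mx 0 j.

Definition point (R : realFieldType) (k : nat) (l : label k) : 'rV[R]_(k + k) :=
  let j := l.2 in
  let n := (2 * k - 1)%N in
  match val l.1 with
  | 0%N => row_mx (e_ R j) 0
  | 1%N => (2 * n%:R)^-1 *: row_mx (const_mx 2 - e_ R j) (const_mx 2 - e_ R j)
  | _ => row_mx 0 (e_ R j)
  end.

Definition labA (k : nat) (j : 'I_k) : label k := (inord 0, j).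
Definition labB (k : nat) (j : 'I_k) : label k := (inord 1, j).
Definition labC (k : nat) (j : 'I_k) : label k := (inord 2, j).

Definition AuC (k : nat) : {set label k} := [set l | val l.1 != 1%N].

Definition good (k : nat) (S : {set label k}) : bool :=
  [&& #|S| == (2 * k)%N,
      [forall j : 'I_k, ~~ ([set labA j; labB j; labC j] \subset S)]
    & S != AuC k].

(** Coordinates [i] and [k + i] of a linear relation [sum_l f l *: point l = 0]
    give [f A_i = f C_i = c (f B_i - 2 beta)], where [c = 1/(2n)] and [beta] is
    the sum of the [B]-coefficients.  If [f] is supported on a good set [S],
    each [B_i] in [S] has [A_i] or [C_i] outside [S], so [f B_i = 2 beta];
    summing gives [beta = 2 m beta] with [m >= 1] the number of [B]-points in
    [S] ([m = 0] would mean [S] is contained in, hence equal to, [A u C]).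
    So [beta = 0] and [f = 0]: the [2k] points of [S] are free. *)

From HB Require Import structures.
From mathcomp Require Import all_boot all_order all_algebra.
From mathcomp Require Import ring lra zify.
Set Implicit Arguments. Unset Strict Implicit.
Import GRing.Theory Num.Theory.
Local Open Scope ring_scope.

Lemma free_map_enum (K : fieldType) (vT : vectType K) (T : finType)
    (P : T -> vT) (S : {set T}) :
  (forall f : T -> K, (forall x, x \notin S -> f x = 0) ->
     \sum_x f x *: P x = 0 -> forall x, f x = 0) ->
  free [seq P x | x <- enum S].
Proof.
move=> indep; set s := enum S; set X := [seq P x | x <- s].
have us : uniq s := enum_uniq _.
have sizeX : size X = size s := size_map _ _.
change (free (in_tuple X)); apply/freeP => kc kc_rel i.
have [x0 _] : {x0 : T | true}.
  by move: i; rewrite sizeX; case: (s) => [[]|x _ _] //; exists x.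
pose f x := oapp kc 0 (insub (index x s)).
have f_out x : x \notin S -> f x = 0.
  by rewrite -(mem_enum S) -index_mem -sizeX => /negbTE sx; rewrite /f insubF.
have f_rel : \sum_x f x *: P x = 0.
  rewrite -[RHS]kc_rel (bigID (mem S)) /= [X in _ + X]big1 ?addr0; last first.
    by move=> x /f_out ->; rewrite scale0r.
  rewrite -big_enum (big_nth x0) -/s -sizeX big_mkord; apply: eq_bigr => j _.
  by rewrite (nth_map x0) -?sizeX // /f index_uniq -?sizeX // valK.
have := indep f f_out f_rel (nth x0 s i).
by rewrite /f index_uniq -?sizeX // valK.
Qed.

Section Labels.
Variable k : nat.

Lemma label_cases (l : label k) :
  [\/ l = labA l.2, l = labB l.2 | l = labC l.2].
Proof.
case: l => -[[|[|[|x]]] hx] j //=; [apply: Or31 | apply: Or32 | apply: Or33];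
  by congr (_, _); apply: val_inj; rewrite /= inordK.
Qed.

Lemma sum_label (M : nmodType) (F : label k -> M) : \sum_l F l =
  \sum_j F (labA j) + \sum_j F (labB j) + \sum_j F (labC j).
Proof.
rewrite (eq_bigr (fun l => F (l.1, l.2))) => [|[]//].
rewrite -(pair_bigA _ (fun x j => F (x, j))) /= !big_ord_recr big_ord0 /= add0r.
by congr (_ + _ + _); apply: eq_bigr => j _; congr (F (_, j));
  apply: val_inj; rewrite /= inordK.
Qed.

Lemma card_label (S : {set label k}) : #|S| =
  (\sum_j ((labA j \in S) + (labB j \in S) + (labC j \in S)))%N.
Proof.
by rewrite -sum1_card big_mkcond (@sum_label _ (fun l => (l \in S : nat)))
  -!big_split.
Qed.

Lemma card_AuC : #|AuC k| = (2 * k)%N.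
Proof.
rewrite card_label (eq_bigr (fun=> 2%N)) => [|j _];
  last by rewrite !inE /= !inordK.
by rewrite sum_nat_const card_ord mulnC.
Qed.

Section GoodSets.
Variable S : {set label k}.
Hypothesis goodS : good S.

Lemma good_no_triple j : ~~ [&& labA j \in S, labB j \in S & labC j \in S].
Proof.
case/and3P: goodS => _ /forallP/(_ j) + _; apply: contra => /and3P[hA hB hC].
by apply/subsetP => l; rewrite !inE -orbA => /or3P[] /eqP->.
Qed.

Lemma good_has_labB : exists j, labB j \in S.
Proof.
have [j Bj|noB] := pickP (fun j => labB j \in S); first by exists j.
case/and3P: goodS => /eqP cardS _ /negP[].
rewrite eqEcard card_AuC cardS leqnn andbT; apply/subsetP => l lS; rewrite inE.
case: (label_cases l) => l_eq; rewrite l_eq /= inordK //.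
by move: lS; rewrite l_eq noB.
Qed.

End GoodSets.

End Labels.

Section Relations.
Variables (R : realFieldType) (k : nat).

Let c : R := (2 * (2 * k - 1)%N%:R)^-1.

Lemma pointA_coord j i :
  point R (labA j) 0 (lshift k i) = (j == i)%:R /\
  point R (labA j) 0 (rshift k i) = 0.
Proof. by rewrite /point /labA /= inordK //= row_mxEl row_mxEr !mxE eq_sym. Qed.

Lemma pointB_coord j i :
  point R (labB j) 0 (lshift k i) = c * (2 - (j == i)%:R) /\
  point R (labB j) 0 (rshift k i) = c * (2 - (j == i)%:R).
Proof.
rewrite /point /labB /= inordK //= !mxE (unsplitK (inl i)) (unsplitK (inr i)).
by rewrite !mxE eq_sym.
Qed.

Lemma pointC_coord j i :
  point R (labC j) 0 (lshift k i) = 0 /\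
  point R (labC j) 0 (rshift k i) = (j == i)%:R.
Proof. by rewrite /point /labC /= inordK //= row_mxEl row_mxEr !mxE eq_sym. Qed.

Lemma sum_mul_delta (F : 'I_k -> R) i : \sum_j F j * (j == i)%:R = F i.
Proof.
rewrite (bigD1 i) //= eqxx mulr1 big1 ?addr0 // => j /negbTE ->.
by rewrite mulr0.
Qed.

Section Coefficients.
Variable f : label k -> R.
Let beta := \sum_j f (labB j).

Lemma sum_pointB_coord i :
  \sum_j f (labB j) * (c * (2 - (j == i)%:R)) = c * (2 * beta - f (labB i)).
Proof.
transitivity (\sum_j (c * 2 * f (labB j) - c * (f (labB j) * (j == i)%:R))).
  by apply: eq_bigr => j _; ring.
by rewrite sumrB -!mulr_sumr sum_mul_delta /beta; ring.
Qed.

Lemma combination_lcoord i :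
  (\sum_l f l *: point R l) 0 (lshift k i) =
  f (labA i) + c * (2 * beta - f (labB i)).
Proof.
rewrite summxE (eq_bigr (fun l => f l * point R l 0 (lshift k i))) => [|l _];
  last by rewrite mxE.
rewrite (@sum_label k R).
under [\sum_j f (labA j) * _]eq_bigr => j _ do
  rewrite (proj1 (pointA_coord j i)).
under [\sum_j f (labB j) * _]eq_bigr => j _ do
  rewrite (proj1 (pointB_coord j i)).
under [\sum_j f (labC j) * _]eq_bigr => j _ do
  rewrite (proj1 (pointC_coord j i)) mulr0.
by rewrite sum_mul_delta sum_pointB_coord big1_eq addr0.
Qed.

Lemma combination_rcoord i :
  (\sum_l f l *: point R l) 0 (rshift k i) =
  f (labC i) + c * (2 * beta - f (labB i)).
Proof.
rewrite summxE (eq_bigr (fun l => f l * point R l 0 (rshift k i))) => [|l _];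
  last by rewrite mxE.
rewrite (@sum_label k R).
under [\sum_j f (labB j) * _]eq_bigr => j _ do
  rewrite (proj2 (pointB_coord j i)).
under [\sum_j f (labC j) * _]eq_bigr => j _ do
  rewrite (proj2 (pointC_coord j i)).
under [\sum_j f (labA j) * _]eq_bigr => j _ do
  rewrite (proj2 (pointA_coord j i)) mulr0.
by rewrite sum_mul_delta sum_pointB_coord big1_eq add0r addrC.
Qed.

Lemma relation_coefAC : \sum_l f l *: point R l = 0 ->
  forall i, f (labA i) = c * (f (labB i) - 2 * beta) /\
            f (labC i) = c * (f (labB i) - 2 * beta).
Proof.
move=> rel i; have := combination_lcoord i; have := combination_rcoord i.
rewrite rel mxE => /eqP; rewrite eq_sym addr_eq0 => /eqP ->.
rewrite mxE => /eqP; rewrite eq_sym addr_eq0 => /eqP ->.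
by split; ring.
Qed.

End Coefficients.

Lemma good_relation_trivial (S : {set label k}) : (2 <= k)%N -> good S ->
  forall f : label k -> R, (forall l, l \notin S -> f l = 0) ->
  \sum_l f l *: point R l = 0 -> forall l, f l = 0.
Proof.
move=> hk goodS f f_out rel.
have coefAC := relation_coefAC rel; set beta := \sum_j f (labB j) in coefAC.
have c_neq0 : c != 0 by rewrite invr_eq0 mulf_neq0 ?pnatr_eq0 //; lia.
have coefB j : f (labB j) = (labB j \in S)%:R * (2 * beta).
  have [Bj|/f_out->] := boolP (labB j \in S); last by rewrite mul0r.
  have [eqA eqC] := coefAC j.
  have : c * (f (labB j) - 2 * beta) = 0.
    have := good_no_triple goodS j; rewrite Bj /= negb_and.
    by case/orP => /f_out; [rewrite eqA | rewrite eqC].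
  by move/eqP; rewrite mul1r mulf_eq0 (negbTE c_neq0) subr_eq0 => /eqP.
have beta0 : beta = 0.
  have [j0 Bj0] := good_has_labB goodS.
  set m := (\sum_j (labB j \in S : nat))%N.
  have m_ge1 : 1 <= m%:R :> R by rewrite ler1n /m (bigD1 j0) //= Bj0.
  have beta_eq : beta = m%:R * (2 * beta).
    rewrite {1}/beta natr_sum mulr_suml.
    by apply: eq_bigr => j _; rewrite coefB.
  have : beta * (2 * m%:R - 1) = 0.
    by rewrite -[RHS](subrr beta) {2}beta_eq; ring.
  by move/eqP; rewrite mulf_eq0 => /orP[/eqP //|/eqP]; lra.
have coefB0 j : f (labB j) = 0 by rewrite coefB beta0 !mulr0.
move=> l; have [eqA eqC] := coefAC l.2.
by case: (label_cases l) => ->;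
  rewrite ?eqA ?eqC coefB0 ?beta0 ?mulr0 ?subr0 ?mulr0.
Qed.

End Relations.

Unset Implicit Arguments.

Theorem mainTheorem6 (R : realFieldType) (k : nat) (hk : (2 <= k)%N)
  (S : {set label k}) :
  good S -> basis_of fullv [seq point R x | x <- enum S].
Proof.
move=> goodS; have /and3P[/eqP cardS _ _] := goodS.
rewrite basisEfree free_map_enum ?subvf; last exact: good_relation_trivial.
by rewrite dimvf dim_matrix size_map -cardE cardS mul1r /=; lia.
Qed.
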